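(* Let $K$ be finite with $|K|\ge2$ and let $f^q:\mathcal{P}^n\to 2^K$ be a voting by quota with quotas $q=\{q_k\}_{k\in K}$, $1\le q_k\le n$. Then $f^q$ is NOM if and only if $2\le q_k\le n-1$ for each $k\in K$.
   Context: $N=\{1,\dots,n\}$, $n\ge2$; alternatives are subsets of $K$; $\mathcal{P}$ all strict linear orders on $2^K$; $t(P_i)$ the top of $P_i$. The voting by quota $f^q$ is defined by: $k\in f^q(P)$ iff $|\{i\in N:k\in t(P_i)\}|\ge q_k$. Option set $O(P_i)=\{f(P_i,P_{-i}):P_{-i}\in\mathcal{P}^{n-1}\}$. $P_i'$ is a manipulation at $P_i$ if $f(P_i',P_{-i})P_if(P_i,P_{-i})$ for some $P_{-i}$; it is obvious if the $P_i$-worst element of $O(P_i')$ is strictly $P_i$-better than that of $O(P_i)$, or the $P_i$-best element of $O(P_i')$ is strictly $P_i$-better than that of $O(P_i)$. NOM means no obvious manipulation exists. *)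

From mathcomp Require Import all_boot.
Set Implicit Arguments. Unset Strict Implicit. Unset Printing Implicit Defensive.

Record pref (T : finType) := Pref {
  prel :> rel T;
  _ : irreflexive prel;
  _ : transitive prel;
  _ : forall x y, x != y -> prel x y || prel y x }.

Section Voting.
Variable K : finType.
Variable n : nat.

(* Alternatives are subsets of K; agents are N = 'I_n. *)
Definition profile := 'I_n -> pref {set K}.

(* t(P_i): the P_i-best alternative (it exists and is unique since P_i is a
   strict linear order on a finite nonempty set; set0 is a dummy default). *)
Definition top (P : pref {set K}) : {set K} :=
  odflt set0 [pick x | [forall y, (y != x) ==> P x y]].

Definition quota_rule (q : K -> nat) (P : profile) : {set K} :=
  [set k | q k <= #|[set i : 'I_n | k \in top (P i)]|].

Definition upd (Q : profile) (i : 'I_n) (Pi : pref {set K}) : profile :=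
  fun j => if j == i then Pi else Q j.

Definition option_set (f : profile -> {set K}) (i : 'I_n) (Pi : pref {set K})
  : {set K} -> Prop :=
  fun x => exists Q : profile, f (upd Q i Pi) = x.

Definition is_worst (R : pref {set K}) (O : {set K} -> Prop) (w : {set K}) :=
  O w /\ forall y, O y -> y != w -> R y w.
Definition is_best (R : pref {set K}) (O : {set K} -> Prop) (b : {set K}) :=
  O b /\ forall y, O y -> y != b -> R b y.

Definition manipulation (f : profile -> {set K}) (i : 'I_n)
  (Pi Pi' : pref {set K}) : Prop :=
  exists Q : profile, Pi (f (upd Q i Pi')) (f (upd Q i Pi)).

Definition obvious_manipulation (f : profile -> {set K}) (i : 'I_n)
  (Pi Pi' : pref {set K}) : Prop :=
  manipulation f i Pi Pi' /\
  ((exists w' w, is_worst Pi (option_set f i Pi') w' /\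
                 is_worst Pi (option_set f i Pi) w /\ Pi w' w) \/
   (exists b' b, is_best Pi (option_set f i Pi') b' /\
                 is_best Pi (option_set f i Pi) b /\ Pi b' b)).

Definition NOM (f : profile -> {set K}) : Prop :=
  forall i Pi Pi', ~ obvious_manipulation f i Pi Pi'.

End Voting.

From mathcomp Require Import all_boot.
From mathcomp Require Import zify.
From Stdlib Require Import ClassicalEpsilon.
Set Implicit Arguments. Unset Strict Implicit. Unset Printing Implicit Defensive.

(* If every quota lies in [2, n-1], the other agents can force any outcome S
   by all voting for S: each k in S gets n-1 >= q_k votes and each k outside
   S at most one.  So every report has the full option set and none is
   obviously better than another.  Conversely, if q_k = 1 (resp. q_k = n),
   the report with top K (resp. top set0) puts k into (resp. keeps k out of)
   every outcome.  Take a truthful preference with top t and bottom w, where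
   k is not in (resp. is in) w and the others can force w against t: then w
   is the worst option under truth-telling but never an option under that
   report, which is therefore an obvious manipulation. *)

Section Preferences.
Variable T : finType.

Lemma pref_irr (R : pref T) x : R x x = false.
Proof. by case: R => r irr ? ? /=; apply: irr. Qed.

Lemma pref_trans (R : pref T) x y z : R x y -> R y z -> R x z.
Proof. by case: R => r ? tr ? /=; apply: tr. Qed.

Lemma pref_total (R : pref T) x y : x != y -> R x y || R y x.
Proof. by case: R => r ? ? tot /=; apply: tot. Qed.

Lemma pref_asym (R : pref T) x y : R x y -> R y x -> False.
Proof. by move=> Rxy /(pref_trans Rxy); rewrite pref_irr. Qed.

Lemma exists_pref_worst (R : pref T) (O : T -> Prop) x0 :
  O x0 -> exists w, O w /\ forall y, O y -> y != w -> R y w.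
Proof.
move=> Ox0; pose Ob x : bool := excluded_middle_informative (O x).
have ObP x : reflect (O x) (Ob x) by apply: sumboolP.
case: (@arg_minnP _ x0 Ob (fun x => #|[set y | R x y]|)); first exact/ObP.
move=> w /ObP Ow w_min; exists w; split=> // y /ObP Oy yw.
case/orP: (pref_total R yw) => // Rwy; move: (w_min y Oy).
suff /proper_card : [set z | R y z] \proper [set z | R w z] by case: leqP.
apply/properP; split; last by exists y; rewrite !inE ?Rwy ?pref_irr.
by apply/subsetP => z; rewrite !inE; apply: pref_trans.
Qed.

Definition topbot_rank (t w x : T) : nat :=
  if x == t then 0 else if x == w then #|T|.+1 else (enum_rank x).+1.

Lemma topbot_rank_inj t w : injective (topbot_rank t w).
Proof.
move=> x y; rewrite /topbot_rank.
have hx : enum_rank x < #|T| := ltn_ord _.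
have hy : enum_rank y < #|T| := ltn_ord _.
case: (eqVneq x t) => xt; case: (eqVneq y t) => yt;
case: (eqVneq x w) => xw; case: (eqVneq y w) => yw; try congruence; try lia.
all: by case=> /val_inj /enum_rank_inj.
Qed.

Definition topbot_pref (t w : T) : pref T.
Proof.
refine (@Pref T (fun x y => topbot_rank t w x < topbot_rank t w y) _ _ _).
- by move=> x; rewrite /= ltnn.
- by move=> y x z; apply: ltn_trans.
- by move=> x y xy; rewrite -neq_ltn inj_eq //; apply: topbot_rank_inj.
Defined.

Lemma topbot_pref_bottom (t w y : T) :
  w != t -> y != w -> topbot_pref t w y w.
Proof.
move=> wt yw; rewrite /= /topbot_rank (negbTE wt) eqxx (negbTE yw).
by case: (y == t); rewrite // ltnS ltn_ord.
Qed.

End Preferences.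

Section ObviousManipulation.
Variables (K : finType) (n : nat).
Implicit Types (f : profile K n -> {set K}) (P : pref {set K}).

Lemma top_topbot_pref (t w : {set K}) : top (topbot_pref t w) = t.
Proof.
rewrite /top; case: pickP => [x /forallP top_x | no_top] /=.
  apply/eqP; apply: contraT => xt; move/implyP: (top_x t).
  by rewrite eq_sym xt /= /topbot_rank eqxx ltn0 => /(_ isT).
have /negbT/forallPn[y] := no_top t; rewrite negb_imply => /andP[yt].
by rewrite /= /topbot_rank eqxx (negbTE yt); case: (y == w).
Qed.

Lemma NOM_of_full_option_sets f :
  (forall i P S, option_set f i P S) -> NOM f.
Proof.
move=> full i P P' [_ [[w' [w [[_ worst_w'] [_ Pw'w]]]] |
                      [b' [b [_ [[_ best_b] Pb'b]]]]]].
- have ww' : w != w' by apply: contraTneq Pw'w => ->; rewrite pref_irr.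
  exact: pref_asym Pw'w (worst_w' w (full i P' w) ww').
- have b'b : b' != b by apply: contraTneq Pb'b => ->; rewrite pref_irr.
  exact: pref_asym Pb'b (best_b b' (full i P b') b'b).
Qed.

Lemma obvious_manipulation_of_bottom f i P P' Q w :
  f (upd Q i P) = w -> (forall y, y != w -> P y w) ->
  (forall Q', f (upd Q' i P') != w) -> obvious_manipulation f i P P'.
Proof.
move=> fQ bottom_w avoid_w; split; first by exists Q; rewrite fQ bottom_w.
have O'_fQ : option_set f i P' (f (upd Q i P')) by exists Q.
have [w' [[Q' <-] worst_w']] := exists_pref_worst P O'_fQ.
left; exists (f (upd Q' i P')), w.
split; first by split; [exists Q' | exact: worst_w'].
split; last exact: bottom_w.
by split=> [|y _ /bottom_w //]; exists Q.
Qed.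

Definition const_profile (S : {set K}) : profile K n := fun=> topbot_pref S S.

Lemma card_supporters_upd_const (S : {set K}) i P k :
  #|[set j | k \in top (upd (const_profile S) i P j)]| =
  (k \in top P) + (k \in S) * n.-1.
Proof.
rewrite (cardsD1 i) inE /upd eqxx; congr (_ + _).
case: (boolP (k \in S)) => kS /=.
  rewrite mul1n (_ : _ :\ i = [set~ i]) ?cardsC1 ?card_ord //; apply/setP => j.
  by rewrite !inE; case: eqP; rewrite //= top_topbot_pref.
rewrite mul0n (_ : _ :\ i = set0) ?cards0 //; apply/setP => j.
by rewrite !inE; case: eqP; rewrite //= top_topbot_pref (negbTE kS).
Qed.

Variable q : K -> nat.

Lemma quota_rule_low (i : 'I_n) P Q k :
  k \in top P -> q k <= 1 -> k \in quota_rule q (upd Q i P).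
Proof.
move=> kP qk; rewrite inE (leq_trans qk) // card_gt0.
by apply/set0Pn; exists i; rewrite inE /upd eqxx.
Qed.

Lemma quota_rule_high (i : 'I_n) P Q k :
  k \notin top P -> n <= q k -> k \notin quota_rule q (upd Q i P).
Proof.
move=> kP qk; rewrite inE -ltnNge (leq_trans _ qk) //.
apply: (@leq_ltn_trans #|[set~ i]|); last first.
  by rewrite cardsC1 card_ord; have := ltn_ord i; lia.
apply/subset_leq_card/subsetP => j; rewrite !inE /upd.
by case: eqP => // _ kP'; rewrite kP' in kP.
Qed.

Hypothesis q_range : forall k, 1 <= q k <= n.

(* Alternatives on which top P and S agree are settled by 1 <= q k <= n. *)
Lemma quota_rule_upd_const (i : 'I_n) P (S : {set K}) :
  (forall k, k \in S -> k \notin top P -> q k < n) ->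
  (forall k, k \in top P -> k \notin S -> 1 < q k) ->
  quota_rule q (upd (const_profile S) i P) = S.
Proof.
move=> S_in t_out; apply/setP => k; rewrite inE card_supporters_upd_const.
move: (S_in k) (t_out k) (q_range k) (ltn_ord i).
by case: (k \in S); case: (k \in top P) => /=; lia.
Qed.

Lemma quota_option_set_full :
  (forall k, 2 <= q k <= n.-1) ->
  forall i P S, option_set (@quota_rule K n q) i P S.
Proof.
move=> q_mid i P S; exists (const_profile S).
by apply: quota_rule_upd_const => k _ _; move: (q_mid k) (ltn_ord i); lia.
Qed.

Lemma quota_rule_not_NOM (i : 'I_n) (t t' w : {set K}) :
  w != t ->
  (forall k, k \in w -> k \notin t -> q k < n) ->
  (forall k, k \in t -> k \notin w -> 1 < q k) ->
  (forall Q, quota_rule q (upd Q i (topbot_pref t' t')) != w) ->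
  ~ NOM (@quota_rule K n q).
Proof.
move=> wt w_in t_out avoid_w NOMq; apply: (NOMq i (topbot_pref t w)).
apply: obvious_manipulation_of_bottom avoid_w.
  by apply: quota_rule_upd_const; rewrite top_topbot_pref.
by move=> y; apply: topbot_pref_bottom.
Qed.

Hypothesis n_gt1 : 1 < n.

Lemma quota_low_not_NOM (i : 'I_n) k k' :
  k' != k -> q k <= 1 -> ~ NOM (@quota_rule K n q).
Proof.
move=> k'k qk.
have avoid (w : {set K}) :
  k \notin w -> forall Q, quota_rule q (upd Q i (topbot_pref setT setT)) != w.
  move=> kw Q; apply: contraNneq kw => <-.
  by apply: quota_rule_low; rewrite ?top_topbot_pref ?inE.
case: (ltnP (q k') n) => qk'.
- apply: (quota_rule_not_NOM (t := set0) _ _ _ (avoid [set k'] _));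
    last by rewrite inE eq_sym.
  + by apply/set0Pn; exists k'; rewrite set11.
  + by move=> j; rewrite inE => /eqP ->.
  + by move=> j; rewrite in_set0.
- apply: (quota_rule_not_NOM (t := [set k']) _ _ _ (avoid set0 _));
    last by rewrite inE.
  + by rewrite eq_sym; apply/set0Pn; exists k'; rewrite set11.
  + by move=> j; rewrite in_set0.
  + by move=> j; rewrite inE => /eqP -> _; lia.
Qed.

Lemma quota_high_not_NOM (i : 'I_n) k k' :
  k' != k -> n <= q k -> ~ NOM (@quota_rule K n q).
Proof.
move=> k'k qk; have k'_in_kk' : k' \in [set k; k'] by rewrite !inE eqxx orbT.
have k'_notin_k : k' \in [set k] = false by rewrite inE (negbTE k'k).
have avoid (w : {set K}) :
  k \in w -> forall Q, quota_rule q (upd Q i (topbot_pref set0 set0)) != w.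
  move=> kw Q; apply: contraTneq kw => <-.
  by apply: quota_rule_high; rewrite ?top_topbot_pref ?inE.
case: (ltnP (q k') n) => qk'.
- apply: (quota_rule_not_NOM (t := [set k]) _ _ _ (avoid [set k; k'] _));
    last by rewrite !inE eqxx.
  + by apply: contraTneq k'_in_kk' => ->; rewrite k'_notin_k.
  + by move=> j; rewrite !inE => /orP[] /eqP ->; rewrite ?eqxx.
  + by move=> j; rewrite !inE => /eqP ->; rewrite eqxx.
- apply: (quota_rule_not_NOM (t := [set k; k']) _ _ _ (avoid [set k] _));
    last by rewrite inE.
  + by apply: contraFneq k'_notin_k => ->.
  + by move=> j; rewrite !inE => /eqP ->; rewrite eqxx.
  + by move=> j; rewrite !inE => /orP[] /eqP ->; rewrite ?eqxx ?k'_notin_k //; lia.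
Qed.

End ObviousManipulation.

Theorem corollary3 (K : finType) (n : nat) (q : K -> nat) :
  2 <= n -> 2 <= #|K| ->
  (forall k, 1 <= q k <= n) ->
  (NOM (@quota_rule K n q) <-> forall k, 2 <= q k <= n.-1).
Proof.
move=> n_gt1 K_gt1 q_range; split; last first.
  by move=> q_mid; apply/NOM_of_full_option_sets/quota_option_set_full.
move=> NOMq k; pose i : 'I_n := Ordinal (ltnW n_gt1).
have [k' k'k] : exists k', k' != k.
  have /card_gt0P[k' /[!inE]] : 0 < #|[set~ k]| by rewrite cardsC1; lia.
  by exists k'.
case: (leqP (q k) 1) => [qk_low | qk_gt1].
  by case: (quota_low_not_NOM q_range n_gt1 i k'k qk_low NOMq).
case: (leqP n (q k)) => [qk_high | qk_ltn]; last by apply/andP; split; lia.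
by case: (quota_high_not_NOM q_range n_gt1 i k'k qk_high NOMq).
Qed.
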